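(* Let $h$ be a smooth function on a neighborhood of $(0,0)$ whose Taylor expansion at $(0,0)$ is $h(x,y)=a^2x^2+b^2y^2+\sum_{m+n\ge3}h_{m,n}x^my^n$, where $a,b>0$ are linearly independent over $\mathbb{Q}$. Then there is a unique formal power series $z(x,y)=\frac12(ax^2-by^2)+\sum_{m+n\ge3}z_{m,n}x^my^n$ satisfying $z_x^2+z_y^2=h$ as formal power series. *)

From mathcomp Require Import all_boot all_order all_algebra.
From mathcomp Require Import reals.
Set Implicit Arguments. Unset Strict Implicit. Unset Printing Implicit Defensive.
Import Order.TTheory GRing.Theory Num.Theory.
Local Open Scope ring_scope.

(* A formal power series in two variables x, y over R, given by its
   coefficient family: s m n is the coefficient of x^m y^n. *)
Definition fps2 (R : Type) := nat -> nat -> R.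

Definition fps2_dx (R : realType) (s : fps2 R) : fps2 R :=
  fun m n => (m.+1)%:R * s m.+1 n.
Definition fps2_dy (R : realType) (s : fps2 R) : fps2 R :=
  fun m n => (n.+1)%:R * s m n.+1.

Definition fps2_mul (R : realType) (s t : fps2 R) : fps2 R :=
  fun m n => \sum_(i < m.+1) \sum_(j < n.+1) s i j * t (m - i)%N (n - j)%N.

Definition fps2_add (R : realType) (s t : fps2 R) : fps2 R :=
  fun m n => s m n + t m n.

Definition Q_lin_indep (R : realType) (a b : R) : Prop :=
  forall p q : rat, ratr p * a + ratr q * b = 0 -> p = 0 /\ q = 0.

Definition jet2 (R : realType) (s : fps2 R) (c20 c02 : R) : Prop :=
  s 0%N 0%N = 0 /\ s 1%N 0%N = 0 /\ s 0%N 1%N = 0 /\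
  s 2%N 0%N = c20 /\ s 1%N 1%N = 0 /\ s 0%N 2%N = c02.

(* On series with the 2-jet (a x^2 - b y^2) / 2, the coefficient of x^m y^n in
   z_x^2 + z_y^2 equals 2 (a m - b n) z_{m,n} plus a quantity depending only on
   coefficients of total degree < m + n: top-degree coefficients of z_x, z_y only
   meet the linear parts a x and - b y of the other factor.  Q-linear independence
   gives a m - b n <> 0 for (m, n) <> (0, 0), so the correction
   w |-> w + (h - (w_x^2 + w_y^2)) / (2 (a m - b n)) is a contraction for the
   degree filtration and its unique fixed point with the right 2-jet is the unique
   solution. *)

From mathcomp Require Import all_boot all_order all_algebra zify ring.
From mathcomp Require Import reals.
From Stdlib Require Import FunctionalExtensionality.
Import Order.TTheory GRing.Theory Num.Theory.
Set Implicit Arguments. Unset Strict Implicit. Unset Printing Implicit Defensive.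
Local Open Scope ring_scope.

Definition eq_below (X : Type) (k : nat) (s t : fps2 X) : Prop :=
  forall m n, (m + n < k)%N -> s m n = t m n.

Section EqBelow.
Variable X : Type.
Implicit Types (s t u : fps2 X) (k : nat).

Lemma eq_below0 s t : eq_below 0 s t.
Proof. by move=> m n; rewrite ltn0. Qed.

Lemma eq_below_le k k' s t : (k <= k')%N -> eq_below k' s t -> eq_below k s t.
Proof. by move=> le_kk' st m n lt_k; apply: st; apply: leq_trans le_kk'. Qed.

Lemma eq_below_sym k s t : eq_below k s t -> eq_below k t s.
Proof. by move=> st m n lt_k; rewrite st. Qed.

Lemma eq_below_trans k s t u : eq_below k s t -> eq_below k t u -> eq_below k s u.
Proof. by move=> st tu m n lt_k; rewrite st ?tu. Qed.

Lemma fps2_ext s t : (forall m n, s m n = t m n) -> s = t.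
Proof.
by move=> st; apply: functional_extensionality => m; apply: functional_extensionality.
Qed.

Lemma eq_below_all s t : (forall k, eq_below k s t) -> s = t.
Proof. by move=> st; apply: fps2_ext => m n; apply: (st (m + n).+1). Qed.

End EqBelow.

Section DegreeContraction.
Variables (X : Type) (P : fps2 X -> Prop) (T : fps2 X -> fps2 X) (k0 : nat).
Hypothesis P_eq_below : forall w w', P w -> eq_below k0 w w' -> P w'.
Hypothesis P_T : forall w, P w -> P (T w).
Hypothesis T_contract : forall k w w',
  P w -> P w' -> eq_below k w w' -> eq_below k.+1 (T w) (T w').

Lemma contraction_fixpoint_unique z z' :
  P z -> P z' -> T z = z -> T z' = z' -> z = z'.
Proof.
move=> Pz Pz' Tz Tz'; apply: eq_below_all; elim=> [|k IHk]; first exact: eq_below0.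
by rewrite -Tz -Tz'; apply: T_contract.
Qed.

Lemma contraction_fixpoint w0 : P w0 -> exists! z, P z /\ T z = z.
Proof.
move=> Pw0; pose w k := iter k T w0.
have Pw k : P (w k) by elim: k => //= k; apply: P_T.
have w_step k : eq_below k (w k) (w k.+1).
  elim: k => [|k IHk]; first exact: eq_below0.
  exact: T_contract (Pw k) (Pw k.+1) IHk.
have w_cauchy k d : eq_below k (w k) (w (d + k)).
  elim: d => [|d IHd]; first by move=> m n.
  apply: eq_below_trans IHd _.
  exact: eq_below_le (leq_addl d k) (w_step _).
pose z m n := w (m + n).+1 m n.
have z_lim k : eq_below k z (w k).
  move=> m n lt_k; rewrite /z -(subnK lt_k).
  exact: w_cauchy (ltnSn _).
have Pz : P z by apply: P_eq_below (Pw k0) (eq_below_sym (z_lim k0)).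
have Tz : T z = z.
  apply: eq_below_all => k; apply: eq_below_le (leqnSn k) _.
  exact: eq_below_trans (T_contract Pz (Pw k) (z_lim k)) (eq_below_sym (z_lim k.+1)).
exists z; split=> // z' [Pz' Tz'].
exact: contraction_fixpoint_unique.
Qed.

End DegreeContraction.

Lemma sum_ord2_delta (V : nmodType) m n i0 j0 (F : nat -> nat -> V) :
  \sum_(i < m.+1) \sum_(j < n.+1)
     (if (i == i0 :> nat) && (j == j0 :> nat) then F i j else 0)
  = if (i0 <= m)%N && (j0 <= n)%N then F i0 j0 else 0.
Proof.
under eq_bigr => i _.
  rewrite -big_mkcond /= (big_ord1_cond_eq _ (F i) (fun=> i == i0 :> nat)).
  over.
by rewrite /= -big_mkcond (big_ord1_cond_eq _ (F^~ j0) (fun=> j0 < n.+1)%N) !ltnS.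
Qed.

Section Fps2Mul.
Variable R : realType.
Implicit Types (s t u v : fps2 R).

Lemma fps2_mulC s t : fps2_mul s t = fps2_mul t s.
Proof.
apply: fps2_ext => m n.
rewrite /fps2_mul (reindex_inj rev_ord_inj); apply: eq_bigr => i _.
rewrite (reindex_inj rev_ord_inj); apply: eq_bigr => j _ /=.
by rewrite !subSS !subKn 1?mulrC // -ltnS.
Qed.

Lemma fps2_mul_subsqr u v m n :
  fps2_mul u u m n - fps2_mul v v m n
  = fps2_mul (fun i j => u i j - v i j) (fps2_add u v) m n.
Proof.
rewrite -[LHS]addr0 -(subrr (fps2_mul u v m n)) {2}fps2_mulC.
rewrite /fps2_mul /fps2_add -!sumrB -big_split /=; apply: eq_bigr => i _.
rewrite -!sumrB -big_split /=; apply: eq_bigr => j _; ring.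
Qed.

Lemma fps2_mul_coef_order1 d s m n :
  (forall i j, ((i + j).+1 < m + n)%N -> d i j = 0) -> s 0%N 0%N = 0 ->
  fps2_mul d s m n
  = d m.-1 n * s 1%N 0%N *+ (0 < m)%N + d m n.-1 * s 0%N 1%N *+ (0 < n)%N.
Proof.
move=> d_low s00.
have term (i j : nat) : (i <= m)%N -> (j <= n)%N ->
    d i j * s (m - i)%N (n - j)%N
    = (if (i == m.-1) && (j == n) then d i j * s 1%N 0%N *+ (0 < m)%N else 0)
    + (if (i == m) && (j == n.-1) then d i j * s 0%N 1%N *+ (0 < n)%N else 0).
  move=> le_im le_jn; have [lt_ij|] := ltnP (i + j).+1 (m + n).
    by rewrite d_low // !mul0r !mul0rn !if_same addr0.
  move=> ge_ij.
  have [[-> ->]|[[m_gt0 [-> ->]]|[n_gt0 [-> ->]]]] :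
      (i = m /\ j = n) \/ (0 < m /\ i = m.-1 /\ j = n)%N \/ (0 < n /\ i = m /\ j = n.-1)%N
    by lia.
  - rewrite !subnn s00 mulr0.
    case: m n {le_im le_jn ge_ij d_low} => [|m] [|n] /=;
      by rewrite ?mulr0n ?if_same ?(gtn_eqF (ltnSn _)) ?andbF ?addr0.
  - case: m m_gt0 {le_im ge_ij d_low} => // m _ /=.
    by rewrite subSnn subnn !eqxx mulr1n (ltn_eqF (ltnSn m)) addr0.
  - case: n n_gt0 {le_jn ge_ij d_low} => // n _ /=.
    by rewrite subSnn subnn !eqxx mulr1n (ltn_eqF (ltnSn n)) andbF add0r.
rewrite /fps2_mul.
under eq_bigr => i _.
  under eq_bigr => j _ do rewrite (term i j (leq_ord i) (leq_ord j)).
  rewrite big_split /=; over.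
rewrite big_split /=.
rewrite (sum_ord2_delta _ _ _ _ (fun i j => d i j * s 1%N 0%N *+ (0 < m)%N)).
rewrite (sum_ord2_delta _ _ _ _ (fun i j => d i j * s 0%N 1%N *+ (0 < n)%N)).
by rewrite !leq_pred !leqnn.
Qed.

End Fps2Mul.

Definition eikonal (R : realType) (z : fps2 R) : fps2 R :=
  fps2_add (fps2_mul (fps2_dx z) (fps2_dx z)) (fps2_mul (fps2_dy z) (fps2_dy z)).

Section Eikonal.
Variables (R : realType) (c20 c02 : R).
Implicit Types (s t w : fps2 R).

Lemma jet2_eq_below s t : jet2 s c20 c02 -> eq_below 3 s t -> jet2 t c20 c02.
Proof. by move=> [s00 [s10 [s01 [s20 [s11 s02]]]]] st; rewrite /jet2 -!st. Qed.

Lemma eq_below_jet2 s t : jet2 s c20 c02 -> jet2 t c20 c02 -> eq_below 3 s t.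
Proof.
move=> [s00 [s10 [s01 [s20 [s11 s02]]]]] [t00 [t10 [t01 [t20 [t11 t02]]]]] m n lt_mn3.
have [[-> ->]|[[-> ->]|[[-> ->]|[[-> ->]|[[-> ->]|[-> ->]]]]]] :
  (m = 0 /\ n = 0 \/ m = 1 /\ n = 0 \/ m = 0 /\ n = 1 \/
   m = 2 /\ n = 0 \/ m = 1 /\ n = 1 \/ m = 0 /\ n = 2)%N by lia.
all: congruence.
Qed.

Lemma eikonal_jet2 w : jet2 w c20 c02 -> jet2 (eikonal w) (4 * c20 ^+ 2) (4 * c02 ^+ 2).
Proof.
move=> [w00 [w10 [w01 [w20 [w11 w02]]]]].
rewrite /jet2 /eikonal /fps2_add /fps2_mul /fps2_dx /fps2_dy !big_ord_recr !big_ord0 /=.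
rewrite !subnn !subn0 !subSS !subn0 w10 w01 w20 w11 w02.
by split; [|split; [|split; [|split; [|split]]]]; ring.
Qed.

Lemma eikonal_coef_sub w w' m n :
  jet2 w c20 c02 -> jet2 w' c20 c02 -> eq_below (m + n) w w' ->
  eikonal w m n - eikonal w' m n = 4 * (c20 * m%:R + c02 * n%:R) * (w m n - w' m n).
Proof.
move=> [_ [w10 [w01 [w20 [w11 w02]]]]] [_ [w'10 [w'01 [w'20 [w'11 w'02]]]]] ww'.
rewrite /eikonal /fps2_add opprD addrACA !fps2_mul_subsqr.
rewrite !fps2_mul_coef_order1 /fps2_add /fps2_dx /fps2_dy.
2,4: by move=> i j lt_ij; rewrite ww' ?subrr //; lia.
2,3: by rewrite ?w10 ?w'10 ?w01 ?w'01 !mulr0 addr0.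
rewrite w20 w'20 w11 w'11 w02 w'02.
case: m n {ww'} => [|m] [|n] /=; rewrite ?mulr0n ?mulr1n; ring.
Qed.

Definition fps2_quadratic : fps2 R := fun m n =>
  if (m, n) == (2%N, 0%N) then c20 else if (m, n) == (0%N, 2%N) then c02 else 0.

Lemma jet2_quadratic : jet2 fps2_quadratic c20 c02.
Proof. by []. Qed.

End Eikonal.

Section EikonalStep.
Variables (R : realType) (c20 c02 : R) (h : fps2 R).
Hypothesis h_jet : jet2 h (4 * c20 ^+ 2) (4 * c02 ^+ 2).
Hypothesis nonresonant :
  forall m n, (0 < m + n)%N -> c20 * m%:R + c02 * n%:R != 0.
Implicit Types (w : fps2 R).

Definition eikonal_step w : fps2 R := fun m n =>
  w m n + (h m n - eikonal w m n) / (4 * (c20 * m%:R + c02 * n%:R)).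

Lemma eikonal_step_low w m n :
  jet2 w c20 c02 -> (m + n < 3)%N -> eikonal_step w m n = w m n.
Proof.
move=> jw lt_mn3.
by rewrite /eikonal_step (eq_below_jet2 (eikonal_jet2 jw) h_jet) // subrr mul0r addr0.
Qed.

Lemma jet2_eikonal_step w : jet2 w c20 c02 -> jet2 (eikonal_step w) c20 c02.
Proof. by move=> jw; apply: (jet2_eq_below jw) => m n lt_mn3; rewrite eikonal_step_low. Qed.

Lemma eikonal_step_contract k w w' :
  jet2 w c20 c02 -> jet2 w' c20 c02 -> eq_below k w w' ->
  eq_below k.+1 (eikonal_step w) (eikonal_step w').
Proof.
move=> jw jw' ww' m n; rewrite ltnS => le_mn_k.
have [lt_mn3|ge_mn3] := ltnP (m + n) 3.
  by rewrite !eikonal_step_low // (eq_below_jet2 jw jw').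
have /eqP := eikonal_coef_sub jw jw' (eq_below_le le_mn_k ww').
rewrite subr_eq => /eqP Ew.
by rewrite /eikonal_step Ew; field; apply: nonresonant; lia.
Qed.

Lemma eikonal_step_fixed w :
  jet2 w c20 c02 -> eikonal_step w = w <-> eikonal w = h.
Proof.
move=> jw; split=> [step_w | Ew]; apply: fps2_ext => m n; last first.
  by rewrite /eikonal_step Ew subrr mul0r addr0.
have [lt_mn3|ge_mn3] := ltnP (m + n) 3.
  exact: eq_below_jet2 (eikonal_jet2 jw) h_jet _ _ lt_mn3.
have c_neq0 : c20 * m%:R + c02 * n%:R != 0 by apply: nonresonant; lia.
have -> : h m n
    = eikonal w m n + 4 * (c20 * m%:R + c02 * n%:R) * (eikonal_step w m n - w m n).
  by rewrite /eikonal_step; field.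
by rewrite step_w subrr mulr0 addr0.
Qed.

End EikonalStep.

Lemma Q_lin_indep_nonresonant (R : realType) (a b : R) :
  Q_lin_indep a b ->
  forall m n, (0 < m + n)%N -> a / 2 * m%:R + - (b / 2) * n%:R != 0.
Proof.
move=> ab_indep m n mn_gt0; apply/eqP => abmn0.
have [/eqP m0 /eqP n0] : (m%:R : rat) = 0 /\ - (n%:R : rat) = 0.
  by apply: ab_indep; rewrite rmorphN !ratr_nat -[RHS](mulr0 2) -abmn0; field.
by move: m0 n0; rewrite oppr_eq0 !pnatr_eq0; lia.
Qed.

Theorem theorem4p2 (R : realType) (a b : R) (h : fps2 R) :
  0 < a -> 0 < b -> Q_lin_indep a b ->
  jet2 h (a ^+ 2) (b ^+ 2) ->
  exists! z : fps2 R,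
    jet2 z (a / 2) (- (b / 2)) /\
    fps2_add (fps2_mul (fps2_dx z) (fps2_dx z))
             (fps2_mul (fps2_dy z) (fps2_dy z)) = h.
Proof.
move=> _ _ /Q_lin_indep_nonresonant nonres h_jet.
have {}h_jet : jet2 h (4 * (a / 2) ^+ 2) (4 * (- (b / 2)) ^+ 2).
  have [a_sq b_sq] : 4 * (a / 2) ^+ 2 = a ^+ 2 /\ 4 * (- (b / 2)) ^+ 2 = b ^+ 2.
    by split; field.
  by rewrite a_sq b_sq.
have fixed_iff := eikonal_step_fixed h_jet nonres.
have [z [[jz step_z] z_uniq]] :=
  contraction_fixpoint (P := fun w => jet2 w (a / 2) (- (b / 2)))
    (@jet2_eq_below _ _ _) (jet2_eikonal_step h_jet)
    (eikonal_step_contract h_jet nonres) (jet2_quadratic _ _).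
exists z; split; first by split; last exact/(fixed_iff _ jz).
by move=> z' [jz' Ez']; apply: z_uniq; split; last exact/(fixed_iff _ jz').
Qed.
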